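(* Let $(v,u,\theta)$ be a (sufficiently regular) solution on $\Omega_T:=\{(t,y):0\le t\le T,\ y>Y(t)\}$ of the Lagrangian free boundary problem $$v_t-u_y=0,\qquad u_t+P_y=\Big(\frac{\mu u_y}{v}\Big)_y,\qquad \Big(c_v\theta+\frac{u^2}{2}\Big)_t+(Pu)_y=\Big(\frac{\kappa\theta_y}{v}+\frac{\mu uu_y}{v}\Big)_y,$$ $P=R\theta/v$, with $(u,\theta)(t,Y(t))=(u_-,\theta_-)$ and $(v,u,\theta)(0,y)=(v_0,u_0,\theta_0)(y)$, where $Y$ is nondecreasing with $Y(0)=0$, and with sufficient decay at $y=\infty$ for the integrals below to make sense. Let $(\tau,z)\in\Omega_T$. Then for all $t\in[0,\tau]$ and all $y\in I_z(\tau):=(Y(\tau),\infty)\cap([z]-1,[z]+4)$, $$v(t,y)=B_z(t,y)A_z(t)+\frac{R}{\mu}\int_0^t\frac{B_z(t,y)A_z(t)}{B_z(s,y)A_z(s)}\,\theta(s,y)\,ds,$$ where $$B_z(t,y):=v_0(y)\exp\Big\{\frac1\mu\int_y^\infty(u_0(\xi)-u(t,\xi))\varphi_z(\xi)\,d\xi\Big\},\qquad A_z(t):=\exp\Big\{\frac1\mu\int_0^t\!\!\int_{[z]+4}^{[z]+5}\Big(\frac{\mu u_y}{v}-P\Big)d\xi\,ds\Big\}.$$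
   Context: $\mu,\kappa,R>0$, $c_v>0$ constants. $[\cdot]$ denotes the integer part. The cutoff $\varphi_z\in W^{1,\infty}(\mathbb{R})$ with parameter $z\in\mathbb{R}$ is $\varphi_z(y)=1$ for $y<[z]+4$, $\varphi_z(y)=[z]+5-y$ for $[z]+4\le y<[z]+5$, $\varphi_z(y)=0$ for $y\ge[z]+5$. In the paper, $Y(t)=-u_-\int_0^t\rho(s,0)ds$ with $u_-<0$ and $v=1/\rho$ is the specific volume. *)

From Stdlib Require Import Reals Lra ClassicalEpsilon.
Open Scope R_scope.

(* Total Riemann integral: the Riemann integral of f on [a,b] when it exists, 0 otherwise. *)
Definition RInt (f : R -> R) (a b : R) : R :=
  match excluded_middle_informative (inhabited (Riemann_integrable f a b)) with
  | left H => RiemannInt (epsilon H (fun _ => True))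
  | right _ => 0
  end.

(* Improper integral int_a^infty f = lim_{b -> infty} int_a^b f (0 if the limit does not exist). *)
Definition conv_inf (f : R -> R) (a l : R) : Prop :=
  forall eps, eps > 0 -> exists M, forall b, b >= M -> Rabs (RInt f a b - l) < eps.

Definition RInt_inf (f : R -> R) (a : R) : R :=
  match excluded_middle_informative (exists l, conv_inf f a l) with
  | left H => proj1_sig (constructive_indefinite_description _ H)
  | right _ => 0
  end.

Definition ipart (z : R) : R := IZR (Int_part z).

Definition phi (z y : R) : R :=
  if Rlt_dec y (ipart z + 4) then 1
  else if Rlt_dec y (ipart z + 5) then ipart z + 5 - y
  else 0.

Definition Omega (T : R) (Y : R -> R) (t y : R) : Prop := 0 <= t <= T /\ Y t < y.

Definition cont_on2 (D : R -> R -> Prop) (f : R -> R -> R) : Prop :=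
  forall t y, D t y -> forall eps, eps > 0 -> exists delta, delta > 0 /\
    forall s x, D s x -> Rabs (s - t) < delta -> Rabs (x - y) < delta ->
      Rabs (f s x - f t y) < eps.

Definition Bz (mu : R) (v0 u0 : R -> R) (u : R -> R -> R) (z t y : R) : R :=
  v0 y * exp (/ mu * RInt_inf (fun xi => (u0 xi - u t xi) * phi z xi) y).

(* A_z(t), with uy the spatial derivative u_y and P = Rg * th / v *)
Definition Az (mu Rg : R) (v uy th : R -> R -> R) (z t : R) : R :=
  exp (/ mu * RInt (fun s => RInt (fun xi => mu * uy s xi / v s xi - Rg * th s xi / v s xi)
                                   (ipart z + 4) (ipart z + 5)) 0 t).

(* Fix y and write a = [z] + 4, so that phi_z is the ramp equal to 1 left of a and
   decreasing linearly to 0 on [a, a + 1].  Let Phi(t) = log (B_z A_z / v_0)(t, y).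
   Differentiating under the integral and using u_t = (mu u_y / v - P)_y, an integration by
   parts against phi_z (whose slope is -1 on (a, a + 1)) cancels the contribution of A_z and
   leaves mu Phi' = (mu u_y / v - P)(t, y).  Hence v_t = u_y = Phi' v + (R / mu) theta, a
   linear ODE in t whose variation-of-constants solution is the claimed formula. *)

From Pilot Require Import Defs.
From Stdlib Require Import Reals Lra ClassicalEpsilon.
From Coquelicot Require Import Coquelicot.
Open Scope R_scope.

(* [RInt] is Coquelicot's integral, [Defs.RInt] the total integral of the statement. *)
Lemma Defs_RInt_eq (f : R -> R) a b : ex_RInt f a b -> Defs.RInt f a b = RInt f a b.
Proof.
  intros H. unfold Defs.RInt.
  destruct (excluded_middle_informative _) as [Hi | Hn].
  - symmetry. apply RInt_Reals.
  - exfalso. apply Hn. constructor. now apply ex_RInt_Reals_0.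
Qed.

Lemma conv_inf_unique f a l l' : conv_inf f a l -> conv_inf f a l' -> l = l'.
Proof.
  intros H H'. apply cond_eq. intros eps Heps.
  destruct (H (eps / 2)) as [M HM]; [lra |].
  destruct (H' (eps / 2)) as [M' HM']; [lra |].
  specialize (HM (Rmax M M') (Rle_ge _ _ (Rmax_l _ _))).
  specialize (HM' (Rmax M M') (Rle_ge _ _ (Rmax_r _ _))).
  apply Rabs_def2 in HM, HM'. apply Rabs_def1; lra.
Qed.

Lemma RInt_inf_eq f a l : conv_inf f a l -> RInt_inf f a = l.
Proof.
  intros H. unfold RInt_inf. destruct (excluded_middle_informative _) as [Hl | Hn].
  - destruct (constructive_indefinite_description _ Hl) as [l' Hl']. simpl.
    exact (conv_inf_unique f a l' l Hl' H).
  - exfalso. apply Hn. now exists l.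
Qed.

Lemma RInt_inf_compact_support (f : R -> R) a b :
  a <= b -> (forall x, b < x -> f x = 0) -> ex_RInt f a b -> RInt_inf f a = RInt f a b.
Proof.
  intros Hab Hsupp Hf. apply RInt_inf_eq. intros eps Heps. exists b. intros c Hc.
  assert (Hzero : forall x, Rmin b c < x < Rmax b c -> 0 = f x).
  { intros x Hx. rewrite Rmin_left, Rmax_right in Hx by lra. symmetry. apply Hsupp. lra. }
  assert (Hf' : ex_RInt f b c) by exact (ex_RInt_ext _ _ b c Hzero (ex_RInt_const b c 0)).
  rewrite Defs_RInt_eq by exact (ex_RInt_Chasles f a b c Hf Hf').
  rewrite <- (RInt_Chasles f a b c Hf Hf'), <- (RInt_ext _ _ b c Hzero), RInt_const.
  change (Rabs (RInt f a b + (c - b) * 0 - RInt f a b) < eps).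
  rewrite Rmult_0_r, Rplus_0_r, Rminus_eq_0, Rabs_R0. exact Heps.
Qed.

Definition clamp (lo hi x : R) : R := Rmax lo (Rmin hi x).

Lemma clamp_in lo hi x : lo <= hi -> lo <= clamp lo hi x <= hi.
Proof. intros H. unfold clamp, Rmax, Rmin. repeat destruct Rle_dec; lra. Qed.

Lemma clamp_id lo hi x : lo <= x <= hi -> clamp lo hi x = x.
Proof. intros H. unfold clamp, Rmax, Rmin. repeat destruct Rle_dec; lra. Qed.

Lemma clamp_lipschitz lo hi x x' :
  lo <= hi -> Rabs (clamp lo hi x - clamp lo hi x') <= Rabs (x - x').
Proof.
  intros H. unfold clamp, Rmax, Rmin.
  repeat destruct Rle_dec; unfold Rabs; repeat destruct Rcase_abs; lra.
Qed.

Lemma continuity_pt_clamp lo hi x : lo <= hi -> continuity_pt (clamp lo hi) x.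
Proof.
  intros H. unfold continuity_pt, continue_in, limit1_in, limit_in; simpl; unfold R_dist.
  intros eps Heps. exists eps. split; [exact Heps |]. intros x' [_ Hx'].
  eapply Rle_lt_trans; [apply clamp_lipschitz; exact H | exact Hx'].
Qed.

Definition ramp (a x : R) : R := clamp 0 1 (a + 1 - x).

Lemma phi_ramp z x : phi z x = ramp (ipart z + 4) x.
Proof.
  unfold phi, ramp, clamp, Rmax, Rmin.
  repeat destruct Rlt_dec; repeat destruct Rle_dec; lra.
Qed.

Lemma continuity_pt_ramp a x : continuity_pt (ramp a) x.
Proof.
  apply (continuity_pt_comp (fun x => a + 1 - x) (clamp 0 1)).
  - apply continuity_pt_minus; [apply continuity_pt_const; now intros ? ? | apply continuity_pt_id].
  - apply continuity_pt_clamp. lra.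
Qed.

Lemma continuity_2d_pt_fst f s x : continuity_2d_pt f s x -> continuity_pt (fun r => f r x) s.
Proof.
  intros H. unfold continuity_pt, continue_in, limit1_in, limit_in; simpl; unfold R_dist.
  intros eps Heps. destruct (H (mkposreal eps Heps)) as [d Hd].
  exists d. split; [apply cond_pos |]. intros s' [_ Hs'].
  apply Hd; [exact Hs' | rewrite Rminus_eq_0, Rabs_R0; apply cond_pos].
Qed.

Lemma continuity_2d_pt_snd f s x : continuity_2d_pt f s x -> continuity_pt (fun r => f s r) x.
Proof.
  intros H. unfold continuity_pt, continue_in, limit1_in, limit_in; simpl; unfold R_dist.
  intros eps Heps. destruct (H (mkposreal eps Heps)) as [d Hd].
  exists d. split; [apply cond_pos |]. intros x' [_ Hx'].
  apply Hd; [rewrite Rminus_eq_0, Rabs_R0; apply cond_pos | exact Hx'].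
Qed.

Lemma continuity_2d_pt_clamp (D : R -> R -> Prop) f lo1 hi1 lo2 hi2 :
  lo1 <= hi1 -> lo2 <= hi2 ->
  (forall s x, lo1 <= s <= hi1 -> lo2 <= x <= hi2 -> D s x) -> cont_on2 D f ->
  forall s x, continuity_2d_pt (fun s x => f (clamp lo1 hi1 s) (clamp lo2 hi2 x)) s x.
Proof.
  intros H1 H2 HD Hf s x eps.
  destruct (Hf _ _ (HD _ _ (clamp_in _ _ s H1) (clamp_in _ _ x H2)) eps (cond_pos eps))
    as [d [Hd Hfd]].
  exists (mkposreal d Hd). intros s' x' Hs' Hx'. simpl in Hs', Hx'.
  apply Hfd.
  - apply HD; apply clamp_in; assumption.
  - eapply Rle_lt_trans; [apply clamp_lipschitz; exact H1 | exact Hs'].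
  - eapply Rle_lt_trans; [apply clamp_lipschitz; exact H2 | exact Hx'].
Qed.

Lemma ex_RInt_continuity_pt (f : R -> R) a b :
  (forall x, Rmin a b <= x <= Rmax a b -> continuity_pt f x) -> ex_RInt f a b.
Proof.
  intros H. apply (@ex_RInt_continuous R_CompleteNormedModule). intros x Hx.
  apply continuity_pt_filterlim. auto.
Qed.

Lemma continuity_pt_RInt_param f c d : c <= d ->
  (forall s x, continuity_2d_pt f s x) ->
  forall s, continuity_pt (fun s => RInt (fun x => f s x) c d) s.
Proof.
  intros Hcd Hf s.
  assert (Hex : forall s', ex_RInt (fun x => f s' x) c d).
  { intros s'. apply ex_RInt_continuity_pt. intros x _. apply continuity_2d_pt_snd, Hf. }
  unfold continuity_pt, continue_in, limit1_in, limit_in; simpl; unfold R_dist.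
  intros eps Heps.
  assert (Heps' : 0 < eps / (d - c + 1)) by (apply Rdiv_lt_0_compat; lra).
  destruct (uniform_continuity_2d_1d' f c d s (fun x _ => Hf s x) (mkposreal _ Heps'))
    as [delta Hdelta].
  exists delta. split; [apply cond_pos |]. intros s' [_ Hs'].
  rewrite <- (@RInt_minus R_CompleteNormedModule) by apply Hex.
  eapply Rle_lt_trans.
  { apply abs_RInt_le_const with (M := eps / (d - c + 1)); [exact Hcd | |].
    - apply (@ex_RInt_minus R_NormedModule); apply Hex.
    - intros x Hx. left. pose proof (cond_pos delta). apply Rabs_def2 in Hs'.
      apply (Hdelta x s x s'); try lra. rewrite Rminus_eq_0, Rabs_R0. lra. }
  apply Rlt_le_trans with ((d - c + 1) * (eps / (d - c + 1))).
  - apply Rmult_lt_compat_r; lra.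
  - right. field. lra.
Qed.

Lemma derivable_pt_lim_RInt (g : R -> R) c s :
  (forall r, continuity_pt g r) -> derivable_pt_lim (fun r => RInt g c r) s (g s).
Proof.
  intros Hg. apply is_derive_Reals.
  apply (@is_derive_RInt R_NormedModule g (fun r => RInt g c r) c s).
  - apply filter_forall. intros r.
    apply (@RInt_correct R_CompleteNormedModule), ex_RInt_continuity_pt. auto.
  - apply continuity_pt_filterlim, Hg.
Qed.

Lemma RInt_derivable_pt_lim (F f : R -> R) a b : a <= b ->
  (forall x, a <= x <= b -> derivable_pt_lim F x (f x)) ->
  (forall x, a <= x <= b -> continuity_pt f x) ->
  RInt f a b = F b - F a.
Proof.
  intros Hab HF Hf. apply is_RInt_unique, (is_RInt_derive F f);
    rewrite Rmin_left, Rmax_right by exact Hab; intros x Hx.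
  - apply is_derive_Reals. auto.
  - apply continuity_pt_filterlim. auto.
Qed.

Lemma derivable_pt_lim_RInt_param (f df : R -> R -> R) c d x (delta : posreal) :
  (forall s y, Rabs (s - x) < delta -> derivable_pt_lim (fun r => f r y) s (df s y)) ->
  (forall s y, continuity_2d_pt df s y) ->
  (forall s, ex_RInt (fun y => f s y) c d) ->
  derivable_pt_lim (fun s => RInt (fun y => f s y) c d) x (RInt (fun y => df x y) c d).
Proof.
  intros Hd Hc Hex.
  assert (HD : forall s y, Rabs (s - x) < delta -> Derive (fun r => f r y) s = df s y).
  { intros s y Hs. apply is_derive_unique, is_derive_Reals. auto. }
  rewrite (RInt_ext (fun y => df x y) (fun y => Derive (fun r => f r y) x)).
  2: { intros y _. symmetry. apply HD. rewrite Rminus_eq_0, Rabs_R0. apply cond_pos. }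
  apply is_derive_Reals, is_derive_RInt_param.
  - exists delta. intros s Hs y _. eexists. apply is_derive_Reals, Hd, Hs.
  - intros y _. apply continuity_2d_pt_ext_loc with (f := df); [| apply Hc].
    exists delta. intros s y' Hs _. symmetry. apply HD, Hs.
  - apply filter_forall. exact Hex.
Qed.

(* The integrating factor [exp (- Phi)] makes [V exp (- Phi) - c \int Th exp (- Phi)]
   constant. *)
Lemma linear_ode_solution (V Phi dPhi Th : R -> R) (c t : R) : 0 <= t ->
  (forall s, 0 <= s <= t -> continuity_pt V s) ->
  (forall s, continuity_pt Phi s) -> (forall s, continuity_pt Th s) ->
  (forall s, 0 < s < t -> derivable_pt_lim Phi s (dPhi s)) ->
  (forall s, 0 < s < t -> derivable_pt_lim V s (dPhi s * V s + c * Th s)) ->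
  V t = exp (Phi t - Phi 0) * V 0 + c * RInt (fun s => exp (Phi t - Phi s) * Th s) 0 t.
Proof.
  intros Ht CV CPhi CTh DPhi DV.
  set (J := fun s => Th s * exp (- Phi s)).
  set (W := fun s => V s * exp (- Phi s) - c * RInt J 0 s).
  assert (Cexp : forall s, continuity_pt (fun s => exp (- Phi s)) s).
  { intros s. apply (continuity_pt_comp (fun s => - Phi s) exp).
    - apply continuity_pt_opp, CPhi.
    - apply derivable_continuous_pt, derivable_pt_exp. }
  assert (CJ : forall s, continuity_pt J s) by (intros s; apply continuity_pt_mult; auto).
  assert (DW : forall s, 0 < s < t -> derivable_pt_lim W s 0).
  { intros s Hs.
    assert (Dexp : derivable_pt_lim (fun s => exp (- Phi s)) s (exp (- Phi s) * - dPhi s)).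
    { apply (derivable_pt_lim_comp (fun s => - Phi s) exp).
      - apply derivable_pt_lim_opp, DPhi, Hs.
      - exact (derivable_pt_lim_exp (- Phi s)). }
    replace 0 with ((dPhi s * V s + c * Th s) * exp (- Phi s)
                    + V s * (exp (- Phi s) * - dPhi s) - c * J s) by (unfold J; ring).
    apply derivable_pt_lim_minus.
    - apply (derivable_pt_lim_mult V (fun s => exp (- Phi s))); auto.
    - apply derivable_pt_lim_scal, derivable_pt_lim_RInt, CJ. }
  assert (CW : forall s, 0 <= s <= t -> continuity_pt W s).
  { intros s Hs. apply continuity_pt_minus.
    - apply continuity_pt_mult; auto.
    - apply continuity_pt_scal, derivable_continuous_pt.
      exists (J s). apply derivable_pt_lim_RInt, CJ. }
  assert (HW : W t = W 0).
  { destruct (MVT_gen W 0 t (fun _ => 0)) as [r [_ Hr]]; simpl; try lra;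
      rewrite Rmin_left, Rmax_right by exact Ht; intros s Hs.
    - apply is_derive_Reals, DW, Hs.
    - apply CW, Hs. }
  assert (HJ0 : RInt J 0 0 = 0) by exact (RInt_point 0 J).
  assert (HVt : V t * exp (- Phi t) = V 0 * exp (- Phi 0) + c * RInt J 0 t).
  { unfold W in HW. rewrite HJ0 in HW. lra. }
  assert (HJt : RInt (fun s => exp (Phi t - Phi s) * Th s) 0 t = exp (Phi t) * RInt J 0 t).
  { transitivity (RInt (fun s => exp (Phi t) * J s) 0 t).
    - apply RInt_ext. intros s _. unfold J, Rminus. rewrite exp_plus.
      change (exp (Phi t) * exp (- Phi s) * Th s = exp (Phi t) * (Th s * exp (- Phi s))).
      ring.
    - apply (@RInt_scal R_CompleteNormedModule), ex_RInt_continuity_pt. auto. }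
  assert (Hinv : exp (Phi t) * exp (- Phi t) = 1)
    by (rewrite <- exp_plus, Rplus_opp_r; apply exp_0).
  rewrite HJt, <- (Rmult_1_r (V t)), <- Hinv.
  unfold Rminus. rewrite exp_plus.
  replace (V t * (exp (Phi t) * exp (- Phi t)))
    with (exp (Phi t) * (V t * exp (- Phi t))) by ring.
  rewrite HVt. ring.
Qed.

Lemma RInt_mult_ramp (F g : R -> R) y a : y <= a ->
  (forall x, y <= x <= a + 1 -> derivable_pt_lim F x (g x)) ->
  (forall x, y <= x <= a + 1 -> continuity_pt g x) ->
  RInt (fun x => g x * ramp a x) y (a + 1) = RInt F a (a + 1) - F y.
Proof.
  intros Hya DF Cg.
  assert (CF : forall x, y <= x <= a + 1 -> continuity_pt F x).
  { intros x Hx. apply derivable_continuous_pt. exists (g x). apply DF, Hx. }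
  assert (Hex : forall h c d, y <= c <= d -> d <= a + 1 ->
            (forall x, y <= x <= a + 1 -> continuity_pt h x) -> ex_RInt h c d).
  { intros h c d Hc Hd Ch. apply ex_RInt_continuity_pt.
    rewrite Rmin_left, Rmax_right by lra. intros x Hx. apply Ch. lra. }
  assert (Cgr : forall x, y <= x <= a + 1 -> continuity_pt (fun x => g x * ramp a x) x).
  { intros x Hx. apply continuity_pt_mult; [auto | apply continuity_pt_ramp]. }
  assert (Cgl : forall x, y <= x <= a + 1 -> continuity_pt (fun x => g x * (a + 1 - x)) x).
  { intros x Hx. apply continuity_pt_mult; [auto |].
    apply continuity_pt_minus; [apply continuity_pt_const; now intros ? ? |].
    apply continuity_pt_id. }
  assert (Eleft : RInt (fun x => g x * ramp a x) y a = RInt g y a).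
  { apply RInt_ext. rewrite Rmin_left, Rmax_right by lra. intros x Hx.
    replace (ramp a x) with 1 by (unfold ramp, clamp, Rmax, Rmin; repeat destruct Rle_dec; lra).
    apply Rmult_1_r. }
  assert (Eright : RInt (fun x => g x * ramp a x) a (a + 1)
                   = RInt (fun x => g x * (a + 1 - x)) a (a + 1)).
  { apply RInt_ext. rewrite Rmin_left, Rmax_right by lra. intros x Hx.
    replace (ramp a x) with (a + 1 - x)
      by (unfold ramp, clamp, Rmax, Rmin; repeat destruct Rle_dec; lra).
    reflexivity. }
  assert (Hparts : RInt (fun x => g x * (a + 1 - x) - F x) a (a + 1)
                   = F (a + 1) * (a + 1 - (a + 1)) - F a * (a + 1 - a)).
  { apply (RInt_derivable_pt_lim (fun x => F x * (a + 1 - x))); [lra | intros x Hx |].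
    - replace (g x * (a + 1 - x) - F x) with (g x * (a + 1 - x) + F x * (0 - 1)) by ring.
      apply (derivable_pt_lim_mult F (fun x => a + 1 - x)); [apply DF; lra |].
      apply derivable_pt_lim_minus; [apply derivable_pt_lim_const | apply derivable_pt_lim_id].
    - intros x Hx. apply continuity_pt_minus; [apply Cgl | apply CF]; lra. }
  rewrite (@RInt_minus R_CompleteNormedModule) in Hparts by (apply Hex; auto; lra).
  rewrite <- (@RInt_Chasles R_CompleteNormedModule _ y a (a + 1)) by (apply Hex; auto; lra).
  rewrite Eleft, Eright, (RInt_derivable_pt_lim F g y a)
    by (auto; intros; apply DF || apply Cg; lra).
  change (F a - F y + RInt (fun x => g x * (a + 1 - x)) a (a + 1) = RInt F a (a + 1) - F y).
  change (RInt (fun x => g x * (a + 1 - x)) a (a + 1) - RInt F a (a + 1)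
          = F (a + 1) * (a + 1 - (a + 1)) - F a * (a + 1 - a)) in Hparts.
  lra.
Qed.

Lemma continuity_pt_Omega_slice T Y f t x :
  cont_on2 (Omega T Y) f -> Omega T Y t x -> continuity_pt (fun r => f t r) x.
Proof.
  intros Hf HO. unfold continuity_pt, continue_in, limit1_in, limit_in; simpl; unfold R_dist.
  intros eps Heps. destruct (Hf t x HO eps Heps) as [d [Hd Hfd]].
  destruct HO as [Ht HYx].
  exists (Rmin d (x - Y t)). split; [apply Rmin_pos; lra |]. intros x' [_ Hx'].
  pose proof (Rmin_l d (x - Y t)). pose proof (Rmin_r d (x - Y t)).
  apply Hfd; [split; [exact Ht | apply Rabs_def2 in Hx'; lra] | | lra].
  rewrite Rminus_eq_0, Rabs_R0. lra.
Qed.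

Lemma continuity_2d_pt_const_fst (g : R -> R) s x :
  continuity_pt g x -> continuity_2d_pt (fun _ r => g r) s x.
Proof. intros Hg. exact (continuity_1d_2d_pt_comp g _ s x Hg (continuity_2d_pt_id2 s x)). Qed.

Section FreeBoundary.

Variables (mu Rg T tau z y : R) (Y : R -> R).
Variables (v u th uy vt ut Py Sy : R -> R -> R) (v0 u0 : R -> R).

Hypothesis Hmu : 0 < mu.
Hypothesis Htau : 0 <= tau <= T.
Hypothesis Hy0 : 0 < y.
Hypothesis HYy : Y tau < y.
Hypothesis Hya : y < ipart z + 4.
Hypothesis HYmono : forall s t, s <= t -> Y s <= Y t.
Hypothesis Hvpos : forall t x, Omega T Y t x -> 0 < v t x.
Hypothesis Hv0 : forall x, 0 < x -> v 0 x = v0 x.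
Hypothesis Hu0 : forall x, 0 < x -> u 0 x = u0 x.
Hypothesis HPy : forall t x, Omega T Y t x ->
  derivable_pt_lim (fun r => Rg * th t r / v t r) x (Py t x).
Hypothesis HSy : forall t x, Omega T Y t x ->
  derivable_pt_lim (fun r => mu * uy t r / v t r) x (Sy t x).
Hypothesis Hvt : forall t x, 0 < t < T -> Y t < x ->
  derivable_pt_lim (fun s => v s x) t (vt t x).
Hypothesis Hut : forall t x, 0 < t < T -> Y t < x ->
  derivable_pt_lim (fun s => u s x) t (ut t x).
Hypothesis Hmass : forall t x, 0 < t < T -> Y t < x -> vt t x = uy t x.
Hypothesis Hmomentum : forall t x, 0 < t < T -> Y t < x -> ut t x + Py t x = Sy t x.
Hypothesis Cv : cont_on2 (Omega T Y) v.
Hypothesis Cu : cont_on2 (Omega T Y) u.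
Hypothesis Cth : cont_on2 (Omega T Y) th.
Hypothesis Cuy : cont_on2 (Omega T Y) uy.
Hypothesis Cut : cont_on2 (Omega T Y) ut.

Let a := ipart z + 4.

Fact y_lt_a : y < a.
Proof. exact Hya. Qed.

Lemma Omega_rect s x : 0 <= s <= tau -> y <= x <= a + 1 -> Omega T Y s x.
Proof. intros Hs Hx. split; [lra |]. pose proof (HYmono s tau (proj2 Hs)). lra. Qed.

(* The restriction to [0, tau] x [y, a + 1], extended to be constant outside: it is continuous
   everywhere, as Coquelicot's lemmas on parametric integrals require. *)
Definition ext (f : R -> R -> R) (s x : R) : R := f (clamp 0 tau s) (clamp y (a + 1) x).

Lemma ext_eq f s x : 0 <= s <= tau -> y <= x <= a + 1 -> ext f s x = f s x.
Proof. intros Hs Hx. unfold ext. now rewrite !clamp_id. Qed.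

Lemma continuity_2d_pt_ext f : cont_on2 (Omega T Y) f -> forall s x, continuity_2d_pt (ext f) s x.
Proof. pose proof y_lt_a. apply continuity_2d_pt_clamp; [lra | lra | exact Omega_rect]. Qed.

Lemma ext_v_pos s x : 0 < ext v s x.
Proof. pose proof y_lt_a. apply Hvpos, Omega_rect; apply clamp_in; lra. Qed.

Lemma derivable_pt_lim_ext_time f df s x : 0 < s < tau ->
  derivable_pt_lim (fun r => f r (clamp y (a + 1) x)) s df ->
  derivable_pt_lim (fun r => ext f r x) s df.
Proof.
  intros Hs. apply (derivable_pt_lim_locally_ext _ _ s 0 tau); [exact Hs |].
  intros r Hr. unfold ext. now rewrite (clamp_id 0 tau r) by lra.
Qed.

Definition flux (s x : R) : R := mu * ext uy s x / ext v s x - Rg * ext th s x / ext v s x.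

Definition du_ramp (s x : R) : R := (ext u 0 x - ext u s x) * ramp a x.

Definition G (s : R) : R := RInt (du_ramp s) y (a + 1).

Definition Phi (s : R) : R := / mu * (G s + RInt (fun r => RInt (flux r) a (a + 1)) 0 s).

Lemma continuity_2d_pt_flux s x : continuity_2d_pt flux s x.
Proof.
  pose proof (ext_v_pos s x). unfold flux, Rdiv.
  apply continuity_2d_pt_minus; apply continuity_2d_pt_mult;
    try (apply continuity_2d_pt_inv; [apply continuity_2d_pt_ext, Cv | lra]);
    apply continuity_2d_pt_mult; try apply continuity_2d_pt_const; apply continuity_2d_pt_ext; auto.
Qed.

Lemma continuity_2d_pt_du_ramp s x : continuity_2d_pt du_ramp s x.
Proof.
  apply continuity_2d_pt_mult; [apply continuity_2d_pt_minus |].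
  - apply continuity_2d_pt_const_fst, continuity_2d_pt_snd, continuity_2d_pt_ext, Cu.
  - apply continuity_2d_pt_ext, Cu.
  - apply continuity_2d_pt_const_fst, continuity_pt_ramp.
Qed.

Lemma Phi_0 : Phi 0 = 0.
Proof.
  unfold Phi, G. rewrite (RInt_point 0).
  rewrite (RInt_ext (du_ramp 0) (fun _ => 0))
    by (intros; unfold du_ramp; rewrite Rminus_eq_0; apply Rmult_0_l).
  rewrite RInt_const. change (/ mu * ((a + 1 - y) * 0 + 0) = 0). ring.
Qed.

Lemma continuity_pt_flux_integral r : continuity_pt (fun r => RInt (flux r) a (a + 1)) r.
Proof. apply continuity_pt_RInt_param; [lra | exact continuity_2d_pt_flux]. Qed.

Lemma continuity_pt_Phi s : continuity_pt Phi s.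
Proof.
  apply continuity_pt_mult; [apply continuity_pt_const; now intros ? ? |].
  apply continuity_pt_plus.
  - apply continuity_pt_RInt_param; [pose proof y_lt_a; lra | exact continuity_2d_pt_du_ramp].
  - apply derivable_continuous_pt. eexists.
    apply derivable_pt_lim_RInt, continuity_pt_flux_integral.
Qed.

Lemma derivable_pt_lim_G s : 0 < s < tau ->
  derivable_pt_lim G s (RInt (fun x => - (ext ut s x * ramp a x)) y (a + 1)).
Proof.
  intros Hs.
  assert (Hd : 0 < Rmin s (tau - s)) by (apply Rmin_pos; lra).
  apply (derivable_pt_lim_RInt_param du_ramp (fun r x => - (ext ut r x * ramp a x))
           y (a + 1) s (mkposreal _ Hd)).
  - intros r x Hr. simpl in Hr. apply Rabs_def2 in Hr.
    pose proof (Rmin_l s (tau - s)). pose proof (Rmin_r s (tau - s)).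
    replace (- (ext ut r x * ramp a x))
      with ((0 - ext ut r x) * ramp a x + (ext u 0 x - ext u r x) * 0) by ring.
    apply (derivable_pt_lim_mult (fun r => ext u 0 x - ext u r x) (fun _ => ramp a x));
      [| apply derivable_pt_lim_const].
    apply (derivable_pt_lim_minus (fun _ => ext u 0 x) (fun r => ext u r x));
      [apply derivable_pt_lim_const |].
    apply derivable_pt_lim_ext_time; [lra |].
    unfold ext. rewrite (clamp_id 0 tau r) by lra.
    pose proof y_lt_a. pose proof (clamp_in y (a + 1) x). pose proof (HYmono r tau).
    apply Hut; lra.
  - intros r x. apply continuity_2d_pt_opp, continuity_2d_pt_mult.
    + apply continuity_2d_pt_ext, Cut.
    + apply continuity_2d_pt_const_fst, continuity_pt_ramp.
  - intros r. apply ex_RInt_continuity_pt. intros x _.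
    apply continuity_2d_pt_snd, continuity_2d_pt_du_ramp.
Qed.

(* The momentum equation [u_t = (mu u_y / v - P)_y] integrated against the ramp. *)
Lemma flux_balance s : 0 < s < tau ->
  RInt (fun x => - (ext ut s x * ramp a x)) y (a + 1) = flux s y - RInt (flux s) a (a + 1).
Proof.
  intros Hs. pose proof y_lt_a.
  set (F := fun x => mu * uy s x / v s x - Rg * th s x / v s x).
  assert (Hbox : forall x, y <= x <= a + 1 -> Omega T Y s x) by (intros; apply Omega_rect; lra).
  assert (Hext : forall f x, Rmin y (a + 1) < x < Rmax y (a + 1) -> ext f s x = f s x).
  { intros f x Hx. rewrite Rmin_left, Rmax_right in Hx by lra. apply ext_eq; lra. }
  assert (HF : RInt (fun x => ut s x * ramp a x) y (a + 1) = RInt F a (a + 1) - F y).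
  { apply RInt_mult_ramp; [lra | intros x Hx | intros x Hx].
    - destruct (Hbox x Hx) as [_ HYx].
      replace (ut s x) with (Sy s x - Py s x) by (pose proof (Hmomentum s x); lra).
      apply derivable_pt_lim_minus; [apply HSy | apply HPy]; auto.
    - apply (continuity_pt_Omega_slice T Y); auto. }
  rewrite (RInt_ext _ (fun x => - (ut s x * ramp a x))) by (intros x Hx; now rewrite Hext).
  rewrite (@RInt_opp R_CompleteNormedModule (fun x => ut s x * ramp a x)).
  2: { apply ex_RInt_continuity_pt. rewrite Rmin_left, Rmax_right by lra. intros x Hx.
       apply continuity_pt_mult; [apply (continuity_pt_Omega_slice T Y); auto |].
       apply continuity_pt_ramp. }
  change (- RInt (fun x => ut s x * ramp a x) y (a + 1) = flux s y - RInt (flux s) a (a + 1)).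
  rewrite HF, (RInt_ext (flux s) F).
  - unfold flux, F. rewrite !ext_eq by lra. ring.
  - rewrite Rmin_left, Rmax_right by lra. intros x Hx.
    unfold flux, F. rewrite !ext_eq by lra. reflexivity.
Qed.

Lemma derivable_pt_lim_Phi s : 0 < s < tau -> derivable_pt_lim Phi s (flux s y / mu).
Proof.
  intros Hs.
  replace (flux s y / mu)
    with (/ mu * ((flux s y - RInt (flux s) a (a + 1)) + RInt (flux s) a (a + 1)))
    by (field; lra).
  apply derivable_pt_lim_scal, derivable_pt_lim_plus.
  - rewrite <- flux_balance by exact Hs. apply derivable_pt_lim_G, Hs.
  - apply (derivable_pt_lim_RInt (fun r => RInt (flux r) a (a + 1))), continuity_pt_flux_integral.
Qed.

Lemma Bz_eq s : 0 <= s <= tau -> Bz mu v0 u0 u z s y = v0 y * exp (/ mu * G s).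
Proof.
  intros Hs. pose proof y_lt_a.
  assert (E : forall x, Rmin y (a + 1) < x < Rmax y (a + 1) ->
            du_ramp s x = (u0 x - u s x) * phi z x).
  { intros x Hx. rewrite Rmin_left, Rmax_right in Hx by lra.
    unfold du_ramp. rewrite phi_ramp, !ext_eq, Hu0 by lra. reflexivity. }
  unfold Bz, G. do 3 f_equal. rewrite (RInt_ext _ _ _ _ E).
  apply RInt_inf_compact_support; [lra | intros x Hx |].
  - rewrite phi_ramp. fold a.
    replace (ramp a x) with 0 by (unfold ramp, clamp, Rmax, Rmin; repeat destruct Rle_dec; lra).
    apply Rmult_0_r.
  - apply (ex_RInt_ext _ _ _ _ E), ex_RInt_continuity_pt. intros x _.
    apply continuity_2d_pt_snd, continuity_2d_pt_du_ramp.
Qed.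

Lemma Az_eq s : 0 <= s <= tau ->
  Az mu Rg v uy th z s = exp (/ mu * RInt (fun r => RInt (flux r) a (a + 1)) 0 s).
Proof.
  intros Hs. pose proof y_lt_a.
  assert (Hin : forall r, 0 <= r <= tau ->
    RInt (flux r) a (a + 1)
    = Defs.RInt (fun x => mu * uy r x / v r x - Rg * th r x / v r x) a (a + 1)).
  { intros r Hr.
    assert (E : forall x, Rmin a (a + 1) < x < Rmax a (a + 1) ->
              flux r x = mu * uy r x / v r x - Rg * th r x / v r x).
    { intros x Hx. rewrite Rmin_left, Rmax_right in Hx by lra.
      unfold flux. rewrite !ext_eq by lra. reflexivity. }
    rewrite Defs_RInt_eq; [now apply RInt_ext |].
    apply (ex_RInt_ext _ _ _ _ E), ex_RInt_continuity_pt. intros x _.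
    apply continuity_2d_pt_snd, continuity_2d_pt_flux. }
  assert (E : forall r, Rmin 0 s < r < Rmax 0 s -> RInt (flux r) a (a + 1)
    = Defs.RInt (fun x => mu * uy r x / v r x - Rg * th r x / v r x) a (a + 1)).
  { intros r Hr. rewrite Rmin_left, Rmax_right in Hr by lra. apply Hin. lra. }
  unfold Az. replace (ipart z + 5) with (a + 1) by (unfold a; ring). fold a.
  rewrite Defs_RInt_eq.
  - do 2 f_equal. symmetry. now apply RInt_ext.
  - apply (ex_RInt_ext _ _ _ _ E), ex_RInt_continuity_pt. intros r _.
    apply continuity_pt_flux_integral.
Qed.

Lemma BzAz_eq s : 0 <= s <= tau ->
  Bz mu v0 u0 u z s y * Az mu Rg v uy th z s = v0 y * exp (Phi s).
Proof.
  intros Hs. rewrite Bz_eq, Az_eq by exact Hs. unfold Phi.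
  rewrite Rmult_plus_distr_l, exp_plus. ring.
Qed.

Lemma v_variation_of_constants t : 0 <= t <= tau ->
  v t y = exp (Phi t) * v0 y + Rg / mu * RInt (fun s => exp (Phi t - Phi s) * ext th s y) 0 t.
Proof.
  intros Ht. pose proof y_lt_a.
  assert (Hode : ext v t y = exp (Phi t - Phi 0) * ext v 0 y
                 + Rg / mu * RInt (fun s => exp (Phi t - Phi s) * ext th s y) 0 t).
  { apply (linear_ode_solution (fun s => ext v s y) Phi (fun s => flux s y / mu)
                                (fun s => ext th s y));
      [lra | intros s Hs | exact continuity_pt_Phi | intros s | intros s Hs | intros s Hs].
    - apply continuity_2d_pt_fst, continuity_2d_pt_ext, Cv.
    - apply continuity_2d_pt_fst, continuity_2d_pt_ext, Cth.
    - apply derivable_pt_lim_Phi. lra.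
    - pose proof (ext_v_pos s y). pose proof (HYmono s tau).
      apply derivable_pt_lim_ext_time; [lra |]. rewrite (clamp_id y (a + 1) y) by lra.
      replace (flux s y / mu * ext v s y + Rg / mu * ext th s y) with (vt s y).
      + apply Hvt; lra.
      + rewrite Hmass by lra. unfold flux. rewrite !ext_eq by lra.
        field. split; [lra | rewrite <- (ext_eq v s y) by lra; lra]. }
  rewrite Phi_0, Rminus_0_r, !ext_eq, Hv0 in Hode by lra.
  exact Hode.
Qed.

Lemma v_representation t : 0 <= t <= tau ->
  v t y = Bz mu v0 u0 u z t y * Az mu Rg v uy th z t
          + Rg / mu * Defs.RInt (fun s => (Bz mu v0 u0 u z t y * Az mu Rg v uy th z t)
                                        / (Bz mu v0 u0 u z s y * Az mu Rg v uy th z s)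
                                        * th s y) 0 t.
Proof.
  intros Ht. pose proof y_lt_a.
  assert (Hv0y : 0 < v0 y) by (rewrite <- Hv0 by exact Hy0; apply Hvpos, Omega_rect; lra).
  assert (E : forall s, Rmin 0 t < s < Rmax 0 t ->
    exp (Phi t - Phi s) * ext th s y
    = Bz mu v0 u0 u z t y * Az mu Rg v uy th z t / (Bz mu v0 u0 u z s y * Az mu Rg v uy th z s)
      * th s y).
  { intros s Hs. rewrite Rmin_left, Rmax_right in Hs by lra.
    rewrite !BzAz_eq, ext_eq by lra. unfold Rminus. rewrite exp_plus, exp_Ropp.
    field. split; [apply Rgt_not_eq, exp_pos | lra]. }
  rewrite Defs_RInt_eq.
  - rewrite <- (RInt_ext _ _ _ _ E), BzAz_eq by lra.
    rewrite (v_variation_of_constants t Ht). ring.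
  - apply (ex_RInt_ext _ _ _ _ E), ex_RInt_continuity_pt. intros s _.
    apply continuity_pt_mult.
    + apply (continuity_pt_comp (fun s => Phi t - Phi s) exp).
      * apply continuity_pt_minus; [apply continuity_pt_const; now intros ? ? |].
        apply continuity_pt_Phi.
      * apply derivable_continuous_pt, derivable_pt_exp.
    + apply continuity_2d_pt_fst, continuity_2d_pt_ext, Cth.
Qed.

End FreeBoundary.

Theorem lemma2p5
  (mu kappa Rg cv T um thm : R) (Y : R -> R)
  (v u th : R -> R -> R) (v0 u0 th0 : R -> R)
  (vt ut uy thy Et Py Sy PUy Qy : R -> R -> R)
  (Hmu : 0 < mu) (Hkappa : 0 < kappa) (HRg : 0 < Rg) (Hcv : 0 < cv)
  (HY0 : Y 0 = 0) (HYmono : forall s t, s <= t -> Y s <= Y t)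
  (Hvpos : forall t y, Omega T Y t y -> 0 < v t y)
  (Hinit : forall y, 0 < y -> v 0 y = v0 y /\ u 0 y = u0 y /\ th 0 y = th0 y)
  (Hbdry : forall t, 0 <= t <= T -> u t (Y t) = um /\ th t (Y t) = thm)
  (Hdx : forall t y, Omega T Y t y ->
     derivable_pt_lim (fun xi => u t xi) y (uy t y) /\
     derivable_pt_lim (fun xi => th t xi) y (thy t y) /\
     derivable_pt_lim (fun xi => Rg * th t xi / v t xi) y (Py t y) /\
     derivable_pt_lim (fun xi => mu * uy t xi / v t xi) y (Sy t y) /\
     derivable_pt_lim (fun xi => Rg * th t xi / v t xi * u t xi) y (PUy t y) /\
     derivable_pt_lim (fun xi => kappa * thy t xi / v t xi + mu * u t xi * uy t xi / v t xi)
       y (Qy t y))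
  (Hdt : forall t y, 0 < t < T -> Y t < y ->
     derivable_pt_lim (fun s => v s y) t (vt t y) /\
     derivable_pt_lim (fun s => u s y) t (ut t y) /\
     derivable_pt_lim (fun s => cv * th s y + (u s y) ^ 2 / 2) t (Et t y))
  (Heq : forall t y, 0 < t < T -> Y t < y ->
     vt t y = uy t y /\ ut t y + Py t y = Sy t y /\ Et t y + PUy t y = Qy t y)
  (Hreg : cont_on2 (Omega T Y) v /\ cont_on2 (Omega T Y) u /\ cont_on2 (Omega T Y) th /\
          cont_on2 (Omega T Y) uy /\ cont_on2 (Omega T Y) vt /\ cont_on2 (Omega T Y) ut /\
          cont_on2 (Omega T Y) Py /\ cont_on2 (Omega T Y) Sy) :
  forall tau z, Omega T Y tau z ->
  forall t y, 0 <= t <= tau -> Y tau < y -> ipart z - 1 < y < ipart z + 4 ->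
    v t y = Bz mu v0 u0 u z t y * Az mu Rg v uy th z t
            + Rg / mu * Defs.RInt (fun s => (Bz mu v0 u0 u z t y * Az mu Rg v uy th z t)
                                      / (Bz mu v0 u0 u z s y * Az mu Rg v uy th z s)
                                      * th s y) 0 t.
Proof.
  intros tau z [Htau _] t y Ht Hy Hyz.
  destruct Hreg as [Cv [Cu [Cth [Cuy [_ [Cut _]]]]]].
  assert (Hy0 : 0 < y) by (pose proof (HYmono 0 tau (proj1 Htau)); lra).
  apply (v_representation mu Rg T tau z y Y v u th uy vt ut Py Sy v0 u0); try tauto.
  - intros x Hx. apply Hinit, Hx.
  - intros x Hx. apply Hinit, Hx.
  - intros s x HO. apply Hdx, HO.
  - intros s x HO. apply Hdx, HO.
  - intros s x Hs Hx. apply Hdt; assumption.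
  - intros s x Hs Hx. apply Hdt; assumption.
  - intros s x Hs Hx. apply Heq; assumption.
  - intros s x Hs Hx. apply Heq; assumption.
Qed.
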